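(* A matrix $A\in\mathcal{B}$ lies in $\ker\overline{\phi}$ if and only if $A=\beta(\Delta)^k$ for some $k\in\mathbb{Z}$, where $\Delta=(\sigma_1\sigma_2\sigma_1)^2$.
   Context: Let $B_3$ be the braid group with standard generators $\sigma_1,\sigma_2$ and $\beta$ the Burau representation $\beta(\sigma_1)=\begin{pmatrix}1-t&t&0\\1&0&0\\0&0&1\end{pmatrix}$, $\beta(\sigma_2)=\begin{pmatrix}1&0&0\\0&1-t&t\\0&1&0\end{pmatrix}$. For a matrix $A$ with Laurent polynomial entries, $\overline{A}$ denotes substitution $t\mapsto t^{-1}$ in every entry. Let $J_3=\begin{pmatrix}1&-t^{-1}&-t^{-1}\\-t&1&-t^{-1}\\-t&-t&1\end{pmatrix}$, $v=(t,t^2,t^3)$ (a row vector), $\vec{1}=(1,1,1)^T$, and $\mathcal{B}=\{A\in\mathrm{GL}(3,\mathbb{Z}[t,t^{-1}]) : vA=v,\ A\vec 1=\vec 1,\ \overline{A}J_3A^T=J_3\}$. For $A=(A_{ij})\in\mathcal{B}$ put, for $k=1,2$, $f_{k1}=A_{k1}(1+t+t^2)-1$, $f_{k2}=A_{k1}+A_{k2}(1+t)-1$, $g_{kl}=f_{kl}/(t(1+t))$, and $\phi(A)=\begin{pmatrix}g_{11}&g_{12}\\ t^{-1}g_{11}+(1+t)g_{21}& t^{-1}g_{12}+(1+t)g_{22}\end{pmatrix}$. Let $\overline{\phi}=\pi\circ\phi$ with $\pi:\mathrm{GL}(2,\mathbb{Q}(t))\to\mathrm{PGL}(2,\mathbb{Q}(t))$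 the projection. *)

From HB Require Import structures.
From mathcomp Require Import all_boot all_order all_algebra.
Set Implicit Arguments. Unset Strict Implicit. Unset Printing Implicit Defensive.
Import Order.TTheory GRing.Theory Num.Theory.
Local Open Scope ring_scope.

Definition K : Type := {fraction {poly rat}}.
Definition tK : K := tofrac 'X.

Definition laurent (x : K) : Prop :=
  exists (p : {poly int}) (n : nat),
    x = tofrac (map_poly (fun z : int => z%:~R : rat) p) / tK ^+ n.

(* The involution t |-> t^-1 on Q(t): evaluate numerator and denominator of
   a representative fraction at t^-1. *)
Definition barK (x : K) : K :=
  let r := repr x in
  (map_poly (fun c : rat => @tofrac _ c%:P) (frac r).1).[tK^-1] / (map_poly (fun c : rat => @tofrac _ c%:P) (frac r).2).[tK^-1].

Definition barM (A : 'M[K]_3) : 'M[K]_3 := map_mx barK A.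

Definition GL3_laurent (A : 'M[K]_3) : Prop :=
  (forall i j, laurent (A i j)) /\ A \in unitmx /\
  (forall i j, laurent (invmx A i j)).

Definition J3 : 'M[K]_3 :=
  \matrix_(i < 3, j < 3)
    (if i == j then 1 else if (i < j)%N then - tK^-1 else - tK).

Definition vrow : 'rV[K]_3 := \row_(j < 3) tK ^+ j.+1.
Definition ones : 'cV[K]_3 := \col_(i < 3) 1.

Definition in_B (A : 'M[K]_3) : Prop :=
  GL3_laurent A /\ vrow *m A = vrow /\ A *m ones = ones /\
  barM A *m J3 *m A^T = J3.

(* Entries with the paper's 1-based indices: Aij i j = A_{ij}. *)
Definition Aij (A : 'M[K]_3) (i j : nat) : K := A (inord i.-1) (inord j.-1).

Definition f_ (A : 'M[K]_3) (k l : nat) : K :=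
  if l == 1%N then Aij A k 1 * (1 + tK + tK ^+ 2) - 1
  else Aij A k 1 + Aij A k 2 * (1 + tK) - 1.

Definition g_ (A : 'M[K]_3) (k l : nat) : K := f_ A k l / (tK * (1 + tK)).

Definition phi (A : 'M[K]_3) : 'M[K]_2 :=
  \matrix_(i < 2, j < 2)
    (if i == 0 :> nat then g_ A 1 j.+1
     else tK^-1 * g_ A 1 j.+1 + (1 + tK) * g_ A 2 j.+1).

(* A lies in the kernel of phi-bar = pi o phi : phi(A) is trivial in PGL(2,Q(t)),
   i.e. a nonzero scalar matrix. *)
Definition in_ker_phibar (A : 'M[K]_3) : Prop :=
  exists c : K, c != 0 /\ phi A = c%:M.

Definition beta_s1 : 'M[K]_3 :=
  \matrix_(i < 3, j < 3)
    nth 0 (nth [::] [:: [:: 1 - tK; tK; 0]; [:: 1; 0; 0]; [:: 0; 0; 1]] i) j.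
Definition beta_s2 : 'M[K]_3 :=
  \matrix_(i < 3, j < 3)
    nth 0 (nth [::] [:: [:: 1; 0; 0]; [:: 0; 1 - tK; tK]; [:: 0; 1; 0]] i) j.

Definition beta_Delta : 'M[K]_3 := (beta_s1 *m beta_s2 *m beta_s1) ^+ 2.

(* The kernel of phi-bar inside B consists of the matrices
   M(c) = P + c (1 - P), where P = ones (1, t, t^2) / (1 + t + t^2) projects onto
   the common fixed line of B along the plane (1, t, t^2)^perp.  Indeed, phi is
   affine in the upper left 2x2 block of A and injective on it, phi (M(c)) = c,
   and a matrix fixing the row v and the column of ones is determined by that
   block.  The map c |-> M(c) is multiplicative and beta(Delta) = M(t^3).
   For A = M(c) in B, the J_3 condition forces c * cbar = 1, and the Laurent
   entry (1 - c) / (1 + t + t^2) makes c = Q(t) / t^n with Q in Z[t] and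
   Q = t^n modulo 1 + t + t^2.  A polynomial with Q(t) Q(1/t) = 1 is a signed
   monomial +-t^k; evaluating at t = 2 modulo 7 shows that the sign is + and
   k = n mod 3, so c is a power of t^3. *)

From HB Require Import structures.
From mathcomp Require Import all_boot all_order all_algebra.
From mathcomp Require Import ring zify.
Set Implicit Arguments. Unset Strict Implicit. Unset Printing Implicit Defensive.
Import GRing.Theory.
Local Open Scope ring_scope.
Local Open Scope quotient_scope.

Local Ltac case_ord3 i := case: i => [[|[|[|?]]] ?] //=.

(* Computations are done at an abstract parameter t, where [field] applies; on
   the concrete field K it unfolds the arithmetic of Q(t) and does not
   terminate.  burau_s1, burau_s2, g_at, phi_at and J_at are beta_s1, beta_s2,
   g_, phi and J3 at parameter t, convertible to them at t = tK. *)
Section Dilation.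
Variables (F : fieldType) (t : F).
Hypotheses (t_neq0 : t != 0) (t1_neq0 : 1 + t != 0) (Dt_neq0 : 1 + t + t ^+ 2 != 0).

Local Notation w := (\row_(j < 3) t ^+ j.+1).
Local Notation ones := (\col_(i < 3) (1 : F)).

Lemma mx3_block_eq0 (D : 'M[F]_3) :
  w *m D = 0 -> D *m ones = 0 ->
  (forall i j : 'I_3, (i < 2)%N -> (j < 2)%N -> D i j = 0) -> D = 0.
Proof.
move=> /matrixP wD /matrixP D1 D0; pose d i j := D (inord i) (inord j).
have DE : D = \matrix_(i < 3, j < 3) d i j.
  by apply/matrixP => i j; rewrite mxE /d !inord_val.
have d_top i j : (i < 2)%N -> (j < 2)%N -> d i j = 0.
  by move=> i2 j2; apply: D0; rewrite inordK // (ltn_trans _ (ltnSn 2)).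
move: wD D1; rewrite DE => wD D1.
have d_row i : (i < 2)%N -> d i 2 = 0.
  move=> i2; have := D1 (inord i) ord0; rewrite !mxE !big_ord_recr big_ord0 /= !mxE /=.
  by rewrite inordK ?(ltn_trans i2) // !mulr1 (d_top i 0) ?(d_top i 1) // !add0r.
have d_up i j : (i < 2)%N -> (j < 3)%N -> d i j = 0.
  move=> i2 j3; have [j2|j2] := ltnP j 2; first exact: d_top.
  have -> : j = 2 by lia.
  exact: d_row.
have d_bot j : (j < 3)%N -> d 2 j = 0.
  move=> j3; have := wD ord0 (inord j).
  rewrite !mxE !big_ord_recr big_ord0 /= !mxE /= inordK // (d_up 0) ?(d_up 1) //.
  by rewrite !mulr0 !add0r => /eqP; rewrite mulf_eq0 expf_eq0 (negPf t_neq0) => /eqP.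
apply/matrixP => i j; rewrite !mxE; have [i2|i2] := ltnP i 2; first exact: d_up.
have -> : nat_of_ord i = 2 by have := ltn_ord i; lia.
exact: d_bot.
Qed.

(* dilmx c = M(c) = P + c (1 - P). *)
Definition dilmx (c : F) : 'M[F]_3 :=
  \matrix_(i, j) ((i == j)%:R * c + (1 - c) * t ^+ j / (1 + t + t ^+ 2)).

Lemma dilmx_fix_row c : w *m dilmx c = w.
Proof.
apply/matrixP => i j; rewrite !mxE !big_ord_recr big_ord0 /= !mxE.
by case_ord3 i; case_ord3 j; field.
Qed.

Lemma dilmx_fix_col c : dilmx c *m ones = ones.
Proof.
apply/matrixP => i j; rewrite !mxE !big_ord_recr big_ord0 /= !mxE.
by case_ord3 i; case_ord3 j; field.
Qed.

Lemma dilmxM c d : dilmx c *m dilmx d = dilmx (c * d).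
Proof.
apply/matrixP => i j; rewrite !mxE !big_ord_recr big_ord0 /= !mxE.
by case_ord3 i; case_ord3 j; field.
Qed.

Lemma dilmx1 : dilmx 1 = 1.
Proof. by apply/matrixP => i j; rewrite !mxE subrr !mul0r addr0 mulr1. Qed.

Lemma dilmxXn c n : dilmx c ^+ n = dilmx (c ^+ n).
Proof.
elim: n => [|n IH]; first by rewrite !expr0 dilmx1.
by rewrite !exprS IH -mulmxE dilmxM.
Qed.

Lemma dilmxV c : c != 0 -> (dilmx c)^-1 = dilmx c^-1.
Proof.
move=> c0; have inv_l : dilmx c^-1 * dilmx c = 1 by rewrite -mulmxE dilmxM mulVf ?dilmx1.
have inv_r : dilmx c * dilmx c^-1 = 1 by rewrite -mulmxE dilmxM mulfV ?dilmx1.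
by rewrite -[LHS]mulr1 -inv_r mulKr //; apply/unitrP; exists (dilmx c^-1).
Qed.

Lemma dilmxz c (k : int) : c != 0 -> dilmx c ^ k = dilmx (c ^ k).
Proof.
move=> c0; case: k => n; first exact: dilmxXn.
by rewrite /exprz dilmxXn dilmxV // expf_neq0.
Qed.

Definition burau_s1 : 'M[F]_3 :=
  \matrix_(i < 3, j < 3)
    nth 0 (nth [::] [:: [:: 1 - t; t; 0]; [:: 1; 0; 0]; [:: 0; 0; 1]] i) j.
Definition burau_s2 : 'M[F]_3 :=
  \matrix_(i < 3, j < 3)
    nth 0 (nth [::] [:: [:: 1; 0; 0]; [:: 0; 1 - t; t]; [:: 0; 1; 0]] i) j.

Lemma burau_Delta : (burau_s1 *m burau_s2 *m burau_s1) ^+ 2 = dilmx (t ^+ 3).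
Proof.
rewrite expr2 -mulmxE; apply/matrixP => i j.
rewrite !mxE !big_ord_recr !big_ord0 /= !mxE !big_ord_recr !big_ord0 /= !mxE.
rewrite !big_ord_recr !big_ord0 /= !mxE.
by case_ord3 i; case_ord3 j; field.
Qed.

Definition g_at (A : 'M[F]_3) (k l : nat) : F :=
  let a i j := A (inord i.-1) (inord j.-1) in
  (if l == 1%N then a k 1 * (1 + t + t ^+ 2) - 1
   else a k 1 + a k 2 * (1 + t) - 1) / (t * (1 + t)).

Definition phi_at (A : 'M[F]_3) : 'M[F]_2 :=
  \matrix_(i < 2, j < 2)
    (if i == 0 :> nat then g_at A 1 j.+1
     else t^-1 * g_at A 1 j.+1 + (1 + t) * g_at A 2 j.+1).

Lemma phi_at_dilmx c : phi_at (dilmx c) = c%:M.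
Proof.
apply/matrixP => i j; rewrite !mxE /g_at /= !mxE -!val_eqE /= !inordK //=.
case: i => [[|[|?]] ?]; case: j => [[|[|?]] ?] //=; rewrite ?mulr1n ?mulr0n.
all: by field; rewrite t_neq0 t1_neq0 Dt_neq0.
Qed.

Lemma phi_at_block_inj (A B : 'M[F]_3) : phi_at A = phi_at B ->
  forall i j : 'I_3, (i < 2)%N -> (j < 2)%N -> A i j = B i j.
Proof.
move=> /matrixP phiAB; have tt1_neq0 : t * (1 + t) != 0 by rewrite mulf_neq0.
have gAB k l : (k < 2)%N -> (l < 2)%N -> g_at A k.+1 l.+1 = g_at B k.+1 l.+1.
  move=> k2 l2; have := phiAB ord0 (Ordinal l2); rewrite !mxE /= => g1.
  case: k k2 => [|[|//]] _ //; have := phiAB (Ordinal (isT : (1 < 2)%N)) (Ordinal l2).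
  by rewrite !mxE /= g1 => /addrI/(mulfI t1_neq0).
move=> i j i2 j2; rewrite -[i]inord_val -[j]inord_val.
have := gAB i 0%N i2 isT; have := gAB i 1%N i2 isT; rewrite /g_at /=.
move=> + /(divIf tt1_neq0)/addIr/(mulIf Dt_neq0) col0.
rewrite col0 => /(divIf tt1_neq0)/addIr/addrI/(mulIf t1_neq0) col1.
by case: j j2 => [[|[|//]] ?] _; rewrite ?col0 ?col1.
Qed.

Lemma eq_dilmx (A : 'M[F]_3) c :
  w *m A = w -> A *m ones = ones -> phi_at A = c%:M -> A = dilmx c.
Proof.
rewrite -(phi_at_dilmx c) => wA A1 /phi_at_block_inj AM.
apply/eqP; rewrite -subr_eq0; apply/eqP/mx3_block_eq0.
- by rewrite mulmxBr wA dilmx_fix_row subrr.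
- by rewrite mulmxBl A1 dilmx_fix_col subrr.
- by move=> i j i2 j2; rewrite !mxE AM // !mxE subrr.
Qed.

End Dilation.

Section Unitarity.
Variables (F : fieldType) (t : F).
Hypotheses (t_neq0 : t != 0) (t1_neq0 : 1 + t != 0) (Dt_neq0 : 1 + t + t ^+ 2 != 0).

Definition J_at : 'M[F]_3 :=
  \matrix_(i < 3, j < 3) (if i == j then 1 else if (i < j)%N then - t^-1 else - t).

Lemma dilmx_J_at00 c d : (dilmx t^-1 d *m J_at *m (dilmx t c)^T) ord0 ord0 =
  1 + (c * d - 1) * (1 + t) ^+ 2 / (1 + t + t ^+ 2).
Proof.
rewrite !mxE !big_ord_recr !big_ord0 /= !mxE !big_ord_recr !big_ord0 /= !mxE /=.
by field; rewrite Dt_neq0 t_neq0.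
Qed.

Lemma dilmx_J_at_unitary c d :
  dilmx t^-1 d *m J_at *m (dilmx t c)^T = J_at -> c * d = 1.
Proof.
move=> /matrixP/(_ ord0 ord0)/eqP; rewrite dilmx_J_at00 mxE /= -subr_eq0 addrAC subrr add0r.
rewrite -mulrA mulf_eq0 mulf_eq0 invr_eq0 sqrf_eq0 (negPf t1_neq0) (negPf Dt_neq0).
by rewrite !orbF subr_eq0 => /eqP.
Qed.

End Unitarity.

Definition revp (R : nzRingType) (p : {poly R}) : {poly R} :=
  \sum_(i < size p) p`_i *: 'X^((size p).-1 - i).

Lemma coef0_revp (R : nzRingType) (p : {poly R}) : (revp p)`_0 = lead_coef p.
Proof.
rewrite /revp coef_sum lead_coefE.
case sp: (size p) => [|n]; first by rewrite big_ord0 nth_default ?sp.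
rewrite big_ord_recr /= subnn coefZ coefXn eqxx mulr1 big1 ?add0r // => i _.
by rewrite coefZ coefXn eq_sym eqn0Ngt subn_gt0 ltn_ord mulr0.
Qed.

(* 2 is a root of 1 + X + X^2 modulo 7, of multiplicative order 3, and -1 is
   not a power of 2 modulo 7. *)
Lemma cyclo3_monomial (q : {poly int}) (n k : nat) (s : bool) :
  'X^n - (1 + 'X + 'X^2) * q = (-1) ^+ s *: 'X^k -> ~~ s /\ (k = n %[mod 3])%N.
Proof.
have two3 : (2%:R ^+ 3 : 'Z_7) = 1 by apply/eqP.
have two_mod m : (2%:R ^+ m : 'Z_7) = 2%:R ^+ (m %% 3).
  by rewrite {1}(divn_eq m 3) exprD mulnC exprM two3 expr1n mul1r.
move=> /(congr1 (fun p : {poly int} => (p.[2] %:~R : 'Z_7))).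
rewrite hornerD hornerN hornerM hornerZ !hornerXn (_ : (1 + 'X + 'X^2).[2] = 7); last first.
  by rewrite !hornerE.
rewrite rmorphB !rmorphM !rmorphXn rmorphN1 [X in _ - X * _](_ : _ = 0) ?mul0r ?subr0;
  last exact/eqP.
rewrite (two_mod n) (two_mod k); have := ltn_mod n 3; have := ltn_mod k 3.
by case: s; case: (n %% 3)%N => [|[|[|?]]] //; case: (k %% 3)%N => [|[|[|?]]] // _ _ /eqP.
Qed.

Lemma divr_expr_eqmod (F : fieldType) (x : F) (m k n : nat) : x != 0 ->
  (k = n %[mod m])%N -> exists e : int, x ^+ k / x ^+ n = (x ^+ m) ^ e.
Proof.
move=> x0 kn; rewrite (divn_eq k m) (divn_eq n m) kn !exprD invfM mulrACA.
rewrite mulfV ?expf_neq0 // mulr1; exists ((k %/ m)%:Z - (n %/ m)%:Z).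
by rewrite expfzDr ?expf_neq0 // -exprnN !(mulnC _ m) !exprM.
Qed.

Lemma tK_neq0 : tK != 0.
Proof. by rewrite tofrac_eq0 polyX_eq0. Qed.

Lemma tK1_neq0 : 1 + tK != 0.
Proof. by rewrite -tofrac1 -rmorphD tofrac_eq0 addrC -[1]opprK -polyCN polyXsubC_eq0. Qed.

Lemma DtK_neq0 : 1 + tK + tK ^+ 2 != 0.
Proof.
rewrite -tofrac1 -rmorphXn -!rmorphD tofrac_eq0; apply/eqP => /(congr1 (coefp 2)).
by rewrite /= !coefD coef1 coefX coefXn coef0 !add0r => /eqP; rewrite oner_eq0.
Qed.

Definition hornerVt (p : {poly rat}) : K := (map_poly (@tofrac _ \o polyC) p).[tK^-1].

Fact hornerVt_is_zmod_morphism : zmod_morphism hornerVt.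
Proof. by move=> p q; rewrite /hornerVt rmorphB hornerD hornerN. Qed.

Fact hornerVt_is_monoid_morphism : monoid_morphism hornerVt.
Proof. by split=> [|p q]; rewrite /hornerVt (rmorph1, rmorphM) (hornerC, hornerM). Qed.

HB.instance Definition _ :=
  GRing.isZmodMorphism.Build {poly rat} K hornerVt hornerVt_is_zmod_morphism.
HB.instance Definition _ :=
  GRing.isMonoidMorphism.Build {poly rat} K hornerVt hornerVt_is_monoid_morphism.

Lemma hornerVtC a : hornerVt a%:P = tofrac a%:P.
Proof. by rewrite /hornerVt map_polyC hornerC. Qed.

Lemma hornerVtXn n : hornerVt 'X^n = tK^-1 ^+ n.
Proof. by rewrite /hornerVt map_polyXn hornerXn. Qed.

Lemma hornerVt_revp p : hornerVt p * tK ^+ (size p).-1 = tofrac (revp p).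
Proof.
rewrite /hornerVt horner_coef size_map_poly mulr_suml rmorph_sum /=.
apply: eq_bigr => i _; rewrite coef_map /= -mul_polyC rmorphM rmorphXn /= -mulrA.
congr (_ * _); have le_i : (i <= (size p).-1)%N.
  by rewrite -ltnS (leq_trans (ltn_ord i)) ?leqSpred.
rewrite -[in tK ^+ (size p).-1](subnK le_i) exprD exprVn mulrCA mulVf ?expf_neq0 ?tK_neq0 //.
by rewrite mulr1.
Qed.

Lemma hornerVt_eq0 p : (hornerVt p == 0) = (p == 0).
Proof.
apply/eqP/eqP => [p0|->]; last exact: rmorph0.
have /esym/eqP := hornerVt_revp p; rewrite p0 mul0r tofrac_eq0 => /eqP rev0.
by apply/eqP; rewrite -lead_coef_eq0 -coef0_revp rev0 coef0.
Qed.

Lemma frac_repr (x : K) : x = tofrac (\n_(repr x)) / tofrac (\d_(repr x)).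
Proof.
rewrite -[x in LHS]reprK; move: (repr x) => r.
suff <- : (\pi_K r) * tofrac \d_r = tofrac \n_r.
  by rewrite mulfK // tofrac_eq0 denom_ratioP.
unlock tofrac; apply: etrans (esym (FracField.pi_mul r (Ratio \d_r 1))) _.
apply/eqmodP; rewrite /= FracField.equivfE /FracField.mulf /=.
by rewrite !numden_Ratio ?mulf_neq0 ?oner_neq0 ?denom_ratioP // !mulr1 mulrC.
Qed.

Lemma fracP (x : K) : exists p q, q != 0 /\ x = tofrac p / tofrac q.
Proof. by exists \n_(repr x), \d_(repr x); split; [exact: denom_ratioP | exact: frac_repr]. Qed.

Lemma barK_frac p q : q != 0 -> barK (tofrac p / tofrac q) = hornerVt p / hornerVt q.
Proof.
move=> q0; set x := tofrac p / tofrac q.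
have d0 : \d_(repr x) != 0 by exact: denom_ratioP.
change (hornerVt \n_(repr x) / hornerVt \d_(repr x) = hornerVt p / hornerVt q).
have /eqP := frac_repr x; rewrite eqr_div ?tofrac_eq0 // -!rmorphM tofrac_eq => /eqP E.
by apply/eqP; rewrite eqr_div ?hornerVt_eq0 // -!rmorphM E.
Qed.

Lemma barK_tofrac p : barK (tofrac p) = hornerVt p.
Proof. by rewrite -[tofrac p]divr1 -tofrac1 barK_frac ?oner_neq0 // rmorph1 divr1. Qed.

Fact barK_is_zmod_morphism : zmod_morphism barK.
Proof.
move=> x y; have [p [q [q0 ->]]] := fracP x; have [r [s [s0 ->]]] := fracP y.
rewrite -mulNr addf_div ?tofrac_eq0 // -!rmorphN -!rmorphM -rmorphD /=.
rewrite !barK_frac ?mulf_neq0 // -mulNr addf_div ?hornerVt_eq0 //.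
by rewrite !rmorphD !rmorphM !rmorphN.
Qed.

Fact barK_is_monoid_morphism : monoid_morphism barK.
Proof.
split=> [|x y]; first by rewrite -tofrac1 barK_tofrac rmorph1.
have [p [q [q0 ->]]] := fracP x; have [r [s [s0 ->]]] := fracP y.
by rewrite mulf_div -!rmorphM /= !barK_frac ?mulf_neq0 // mulf_div !rmorphM.
Qed.

HB.instance Definition _ := GRing.isZmodMorphism.Build K K barK barK_is_zmod_morphism.
HB.instance Definition _ := GRing.isMonoidMorphism.Build K K barK barK_is_monoid_morphism.

Lemma barK_tK : barK tK = tK^-1.
Proof. by rewrite barK_tofrac /hornerVt map_polyX hornerX. Qed.

Lemma barM_dilmx c : barM (dilmx tK c) = dilmx tK^-1 (barK c).
Proof.
apply/matrixP => i j; rewrite !mxE.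
by rewrite !(rmorphD, rmorphN, rmorphM, rmorph_nat, rmorph1, fmorphV, rmorphXn) /= barK_tK.
Qed.

Lemma norm1_monomial (P : {poly rat}) : tofrac P * hornerVt P = 1 ->
  exists (a : rat) (k : nat), a ^+ 2 = 1 /\ P = a *: 'X^k.
Proof.
move=> normP; set d := (size P).-1.
have PrevP : P * revp P = 'X^d.
  by apply/eqP; rewrite -tofrac_eq rmorphM rmorphXn /= -hornerVt_revp mulrA normP mul1r.
have /dvdp_exp_XsubCP[k _] : P %| ('X - 0%:P) ^+ d by rewrite subr0 -PrevP dvdp_mulr.
rewrite subr0 => /eqpP[[c1 c2] /andP[c1_neq0 _] /= Pk].
have {}Pk : P = (c2 / c1) *: 'X^k.
  by rewrite mulrC -scalerA -Pk scalerA mulVf ?scale1r.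
exists (c2 / c1), k; split=> //; move: normP; rewrite {}Pk; move: (c2 / c1) => a.
rewrite -mul_polyC !rmorphM /= hornerVtC hornerVtXn rmorphXn mulrACA exprVn.
rewrite mulfV ?expf_neq0 ?tK_neq0 // mulr1 -rmorphM -polyCM -tofrac1 -polyC1 /=.
by move/eqP; rewrite tofrac_eq (inj_eq polyC_inj) -expr2 => /eqP.
Qed.

Lemma norm1_laurent_exp3 (c : K) : c * barK c = 1 ->
  laurent ((1 - c) / (1 + tK + tK ^+ 2)) -> exists k : int, c = (tK ^+ 3) ^ k.
Proof.
move=> normc [q [n qE]].
pose P : {poly int} := 'X^n - (1 + 'X + 'X^2) * q.
have tKn : tK ^+ n = tofrac 'X^n by rewrite rmorphXn.
have PhiE : tofrac (map_poly intr (1 + 'X + 'X^2 : {poly int})) = 1 + tK + tK ^+ 2.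
  by rewrite !rmorphD /= map_polyX map_polyXn rmorphXn !rmorph1.
have XnE m : tofrac (map_poly intr ('X^m : {poly int})) = tK ^+ m.
  by rewrite map_polyXn rmorphXn.
have cE : c = tofrac (map_poly intr P) / tK ^+ n.
  rewrite /P !rmorphB !rmorphM /= PhiE XnE mulrBl divff ?expf_neq0 ?tK_neq0 //.
  by rewrite -mulrA -qE mulrC divfK ?DtK_neq0 // subKr.
have normP : tofrac (map_poly intr P) * hornerVt (map_poly intr P) = 1.
  move: normc; rewrite cE tKn barK_frac ?monic_neq0 ?monicXn // hornerVtXn -tKn.
  by rewrite exprVn invrK mulrACA mulVf ?mulr1 // expf_neq0 ?tK_neq0.
have [a [k [a2 Pk]]] := norm1_monomial normP.
have [s aE] : exists s : bool, a = (-1) ^+ s.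
  by move/eqP: a2; rewrite sqrf_eq1 => /orP[/eqP->|/eqP->]; [exists false | exists true].
have PE : P = (-1) ^+ s *: 'X^k.
  apply: (map_inj_poly (@intr_inj rat) (rmorph0 _)).
  by rewrite Pk aE map_polyZ map_polyXn rmorphXn rmorphN1.
have [/negPf s_false kn] := cyclo3_monomial PE.
have [e eE] := divr_expr_eqmod tK_neq0 kn; exists e.
by rewrite cE PE s_false expr0 scale1r XnE eE.
Qed.

Lemma phiE (A : 'M[K]_3) : phi A = phi_at tK A.
Proof. by []. Qed.

Lemma beta_DeltaE : beta_Delta = dilmx tK (tK ^+ 3).
Proof. exact: burau_Delta DtK_neq0. Qed.

Theorem corollary3p12 (A : 'M[K]_3) :
  in_B A -> (in_ker_phibar A <-> exists k : int, A = beta_Delta ^ k).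
Proof.
move=> [[laurentA _] [vA [A1 unitaryA]]].
(* Nonvanishing side conditions are passed explicitly: [done] would try to
   decide them by computing in K. *)
have tK3_neq0 : tK ^+ 3 != 0 := expf_neq0 _ tK_neq0.
split=> [[c [_]] | [k ->]].
- rewrite phiE => /(eq_dilmx tK_neq0 tK1_neq0 DtK_neq0 vA A1) AE.
  have normc : c * barK c = 1.
    apply: (dilmx_J_at_unitary tK_neq0 tK1_neq0 DtK_neq0).
    by rewrite -barM_dilmx -AE; exact: unitaryA.
  have [k ck] : exists k : int, c = (tK ^+ 3) ^ k.
    apply: norm1_laurent_exp3 normc _.
    have := laurentA (Ordinal (isT : (1 < 3)%N)) ord0.
    by rewrite AE mxE /= mul0r add0r expr0 mulr1.
  by exists k; rewrite AE beta_DeltaE ck (dilmxz DtK_neq0 _ tK3_neq0).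
- exists ((tK ^+ 3) ^ k); split; first exact: expfz_neq0 tK3_neq0.
  rewrite beta_DeltaE (dilmxz DtK_neq0 _ tK3_neq0) phiE.
  by rewrite (phi_at_dilmx tK_neq0 tK1_neq0 DtK_neq0).
Qed.
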